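(* Let $M'=M[D,K]$ be a compatible minor of the weighted uncertainty matroid $\mathcal{M}$ such that $M'$ contains no non-trivial element $f$ with either (a) $w_f=L_f$ and $f$ a maximum-weight element of some circuit of $M'$, or (b) $w_f=U_f$ and $f$ a minimum-weight element of $E(M')\setminus\mathrm{span}_{M'}(B'\setminus\{f\})$ for some basis $B'$ of $M'$ containing $f$. Let $e$ be a trivial element of $M'$ such that (i) there exists a circuit $C$ of $M'$ with $e\in C$ and (ii) $e$ has maximum weight in $C$. Then $M[D\cup\{e\},K]$ is a compatible minor of $\mathcal{M}$.
   Context: A weighted uncertainty matroid $\mathcal{M}=(E,\mathcal{I},A,w)$ consists of a matroid $M=(E,\mathcal{I})$ on a finite set $E$, for each $e\in E$ a non-empty finite union $A_e$ of bounded real intervals (each open or closed), a weight $w_e\in A_e$, and a query cost $c_e\ge0$. $L_e=\inf A_e$, $U_e=\sup A_e$; $e$ is trivial if $A_e=\{w_e\}$. A minimum-weight basis (MWB) is a basis minimizing total weight. A weight assignment is $w^*$ with $w^*_e\in A_e$, consistent with $Q$ if $w^*_e=w_e$ on $Q$. $Q$ verifies an MWB $B$ if for every weight assignment consistent with $Q$, $B$ is an MWB with respect to it; a certificate for $\mathcal{M}$ is a set verifying some MWB, and $c^*$ denotes the minimum cost $\sum_{e\in Q}c_e$ of a certificate for $\mathcal{M}$. For $D,K\subseteq E$, $M[D,K]$ is the matroid obtained from $M$ by deleting $D$ and contracting $K$, ground set $E(M[D,K])=E\setminus(D\cup K)$, weights restricted. $M[D,K]$ is a compatible minor if there is a set $Q$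 of cost $c^*$ verifying an MWB $B$ of $\mathcal{M}$ with $K\subseteq B$, $D\cap B=\emptyset$. $\mathrm{span}_N(X)=\{e: r_N(X\cup\{e\})=r_N(X)\}$. *)

From mathcomp Require Import all_boot all_order all_algebra.
From mathcomp Require classical_sets.
From mathcomp Require Import reals.
Set Implicit Arguments. Unset Strict Implicit. Unset Printing Implicit Defensive.
Import Order.TTheory GRing.Theory Num.Theory.
Local Open Scope ring_scope.

Definition matroid_axioms (E : finType) (indep : {set E} -> bool) : Prop :=
  [/\ indep set0,
      (forall X Y : {set E}, Y \subset X -> indep X -> indep Y) &
      (forall X Y : {set E}, indep X -> indep Y -> (#|X| < #|Y|)%N ->
          exists2 y, y \in Y :\: X & indep (y |: X))].

Definition rank (E : finType) (indep : {set E} -> bool) (X : {set E}) : nat :=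
  (\max_(I : {set E} | (I \subset X) && indep I) #|I|)%N.

Section Minor.
Variables (E : finType) (indep : {set E} -> bool) (D K : {set E}).

Definition mground : {set E} := ~: (D :|: K).
(* rank of the minor M[D,K] = (M \ D) / K : r'(X) = r(X u K) - r(K) *)
Definition mrank (X : {set E}) : nat := (rank indep (X :|: K) - rank indep K)%N.
Definition mindep (X : {set E}) : bool := (X \subset mground) && (mrank X == #|X|).
Definition mbasis (B : {set E}) : bool :=
  mindep B && [forall x in mground :\: B, ~~ mindep (x |: B)].
Definition mcircuit (C : {set E}) : bool :=
  [&& C \subset mground, ~~ mindep C & [forall x in C, mindep (C :\ x)]].
Definition mspan (X : {set E}) : {set E} :=
  [set x in mground | mrank (x |: X) == mrank X].
End Minor.

Definition bounded_itv (R : numDomainType) (i : interval R) : bool :=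
  if i is Interval (BSide _ _) (BSide _ _) then true else false.

Record umatroid (R : realType) (E : finType) := UMatroid {
  uindep : {set E} -> bool;
  uindep_axioms : matroid_axioms uindep;
  uA : E -> seq (interval R);
  uA_bounded : forall e, all (@bounded_itv R) (uA e);
  uA_nonempty : forall e, exists x, has (fun i => x \in i) (uA e);
  uw : E -> R;
  uw_in : forall e, has (fun i => uw e \in i) (uA e);
  uc : E -> R;
  uc_ge0 : forall e, 0 <= uc e }.

Section Uncertainty.
Variables (R : realType) (E : finType) (M : umatroid R E).

Definition Aset (e : E) : classical_sets.set R := fun x => has (fun i => x \in i) (uA M e).
Definition uL (e : E) : R := inf (Aset e).
Definition uU (e : E) : R := sup (Aset e).
Definition utrivial (e : E) : Prop := Aset e = (fun x => x = uw M e).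

Definition wassign (ws : E -> R) : Prop := forall e, Aset e (ws e).
Definition consistent (Q : {set E}) (ws : E -> R) : Prop :=
  forall e, e \in Q -> ws e = uw M e.

Definition mwb (ws : E -> R) (B : {set E}) : Prop :=
  mbasis (uindep M) set0 set0 B /\
  forall B', mbasis (uindep M) set0 set0 B' ->
    \sum_(e in B) ws e <= \sum_(e in B') ws e.

Definition verifies (Q B : {set E}) : Prop :=
  forall ws, wassign ws -> consistent Q ws -> mwb ws B.

Definition certificate (Q : {set E}) : Prop :=
  exists B, mwb (uw M) B /\ verifies Q B.

Definition cost (Q : {set E}) : R := \sum_(e in Q) uc M e.

Definition compatible_minor (D K : {set E}) : Prop :=
  exists Q B, [/\ verifies Q B, mwb (uw M) B, K \subset B, [disjoint D & B] &
    forall Q', certificate Q' -> cost Q <= cost Q'].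
End Uncertainty.

From mathcomp Require Import all_boot all_order all_algebra.
From mathcomp Require Import reals.
From mathcomp Require Import zify.
Import Order.TTheory GRing.Theory Num.Theory.

(* If e is not in the optimal basis B there is nothing to do. Otherwise basis
   exchange along the circuit C of M[D,K] yields f in C \ B such that
   B - e + f is a basis of M. Since B is an MWB under every assignment
   consistent with the optimal certificate Q, w*_e <= w*_f for all of them.
   If one of them moved w_f, then f would be non-trivial, and perturbing that
   assignment at f alone would give w_f <= w_e <= x for every x in A_f, i.e.
   w_f = L_f, with f of maximum weight in C: excluded by (a). So every
   consistent assignment gives f the weight w_f = w_e, and Q also verifies
   B - e + f, which avoids e. *)

Section Matroid.
Context {E : finType} {indep : {set E} -> bool}.
Hypothesis indep_axioms : matroid_axioms indep.

Lemma indep0 : indep set0. Proof. by case: indep_axioms. Qed.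

Lemma indepS {X Y : {set E}} : Y \subset X -> indep X -> indep Y.
Proof. by case: indep_axioms => _ + _; apply. Qed.

Lemma indep_augment {X Y : {set E}} : indep X -> indep Y -> (#|X| < #|Y|)%N ->
  exists2 y, y \in Y :\: X & indep (y |: X).
Proof. by case: indep_axioms => _ _; apply. Qed.

Local Notation rk := (rank indep).

Lemma indep_leq_rank {I X : {set E}} : I \subset X -> indep I -> (#|I| <= rk X)%N.
Proof.
by move=> sIX iI; apply: (leq_bigmax_cond (F := fun J : {set E} => #|J|) I); rewrite sIX.
Qed.

Lemma rank_witness (X : {set E}) :
  exists I : {set E}, [/\ I \subset X, indep I & #|I| = rk X].
Proof.
have X0 : (0 < #|[pred J : {set E} | (J \subset X) && indep J]|)%N.
  by apply/card_gt0P; exists set0; rewrite inE sub0set indep0.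
have [I] := eq_bigmax_cond (fun J : {set E} => #|J|) X0.
by rewrite inE => /andP[sIX iI] eqI; exists I.
Qed.

Lemma rank_leq_card (X : {set E}) : (rk X <= #|X|)%N.
Proof. by apply/bigmax_leqP => I /andP[sIX _]; apply: subset_leq_card. Qed.

Lemma indep_rankE (X : {set E}) : indep X = (rk X == #|X|).
Proof.
apply/idP/eqP => [iX | rX].
  by apply/eqP; rewrite eqn_leq rank_leq_card indep_leq_rank.
have [I [sIX iI cI]] := rank_witness X.
suff -> : X = I by [].
by apply/eqP; rewrite eq_sym eqEcard sIX cI rX /=.
Qed.

Lemma rankS {X Y : {set E}} : X \subset Y -> (rk X <= rk Y)%N.
Proof.
move=> sXY; have [I [sIX iI <-]] := rank_witness X.
exact/indep_leq_rank/iI/(subset_trans sIX).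
Qed.

Lemma rankU1 (x : E) (X : {set E}) : (rk (x |: X) <= (rk X).+1)%N.
Proof.
have [I [sI iI <-]] := rank_witness (x |: X).
have : (#|I :\ x| <= rk X)%N.
  apply: indep_leq_rank; last exact: indepS (subsetDl _ _) iI.
  by rewrite subDset.
by have := cardsD1 x I; lia.
Qed.

Lemma rank_extend {I X : {set E}} : I \subset X -> indep I ->
  exists J : {set E}, [/\ I \subset J, J \subset X, indep J & #|J| = rk X].
Proof.
move=> sIX iI.
pose P (J : {set E}) := [&& I \subset J, J \subset X & indep J].
have PI : P I by rewrite /P subxx sIX iI.
case: (arg_maxnP (fun J : {set E} => #|J|) PI) => J /and3P[sIJ sJX iJ] Jmax.
exists J; split=> //; apply/eqP; rewrite eqn_leq indep_leq_rank //=.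
have [W [sWX iW <-]] := rank_witness X; rewrite leqNgt; apply/negP => ltJW.
have [y /setDP[yW yJ] iyJ] := indep_augment iJ iW ltJW.
have /Jmax : P (y |: J).
  by rewrite /P iyJ subUset sub1set (subsetP sWX) // sJX andbT (subset_trans sIJ) ?subsetUr.
by rewrite cardsU1 yJ; lia.
Qed.

Lemma rank0 : rk set0 = 0%N.
Proof. by apply/eqP; rewrite -leqn0 -(cards0 E) rank_leq_card. Qed.

Lemma mindep00 (X : {set E}) : mindep indep set0 set0 X = indep X.
Proof.
by rewrite /mindep /mground /mrank !setU0 setC0 subsetT rank0 subn0 indep_rankE.
Qed.

Lemma mbasis00P (B : {set E}) :
  mbasis indep set0 set0 B <-> indep B /\ forall x, x \notin B -> ~~ indep (x |: B).
Proof.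
rewrite /mbasis mindep00; split=> [/andP[iB /forallP Bmax] | [iB Bmax]].
  by split=> // x xB; have := Bmax x; rewrite mindep00 /mground !inE xB; apply.
by rewrite iB; apply/forallP => x; apply/implyP => /setDP[_ xB]; rewrite mindep00 Bmax.
Qed.

Lemma mbasis00_card (B X : {set E}) : mbasis indep set0 set0 B ->
  indep X -> #|X| = #|B| -> mbasis indep set0 set0 X.
Proof.
move=> /mbasis00P[iB Bmax] iX cX; apply/mbasis00P; split=> // x xX.
apply/negP => ixX.
have ltBX : (#|B| < #|x |: X|)%N by rewrite cardsU1 xX cX.
have [y /setDP[_ yB] iyB] := indep_augment iB ixX ltBX.
by move: (Bmax y yB); rewrite iyB.
Qed.

Lemma mcircuit_rankD1 {D K C : {set E}} {e : E} : mcircuit indep D K C -> e \in C ->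
  rk (C :|: K) = rk ((C :\ e) :|: K).
Proof.
move=> /and3P[sC]; rewrite /mindep /mrank sC /= => /eqP C_dep /forallP/(_ e) + eC.
rewrite eC /= => /andP[_ /eqP Ce_indep].
have CK : C :|: K = e |: ((C :\ e) :|: K) by rewrite setUA setD1K.
have := rankS (subsetUr (C :\ e) K); have := rankU1 e ((C :\ e) :|: K).
have := rankS (subsetUr [set e] ((C :\ e) :|: K)).
have := cardsD1 e C; rewrite -CK eC; lia.
Qed.

Lemma mbasis00_exchange {D K B C : {set E}} {e : E} :
  mbasis indep set0 set0 B -> K \subset B -> mcircuit indep D K C -> e \in C -> e \in B ->
  exists2 f, f \in C :\: B & mbasis indep set0 set0 (f |: (B :\ e)).
Proof.
move=> bB sKB cC eC eB; have [iB _] := (mbasis00P B).1 bB.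
have eK : e \notin K.
  by case/and3P: cC => /subsetP/(_ e eC); rewrite !inE negb_or => /andP[].
set Z := (C :\ e) :|: K.
have eZ : e \notin Z by rewrite !inE eqxx (negbTE eK).
have CK : C :|: K = e |: Z by rewrite setUA setD1K.
have [I [sIZ iI cI]] := rank_witness Z.
have sIBC : I \subset B :|: C.
  rewrite (subset_trans sIZ) // subUset (subset_trans (subsetDl C [set e])) ?subsetUr //.
  by rewrite (subset_trans sKB) ?subsetUl.
have [J [sIJ sJBC iJ cJ]] := rank_extend sIBC iI.
have eJ : e \notin J.
  apply/negP => eJ.
  have eI : e \notin I by apply: contra eZ; apply/subsetP.
  have sIJe : e |: I \subset J by rewrite subUset sub1set eJ.
  have := indep_leq_rank (setUS [set e] sIZ) (indepS sIJe iJ).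
  by rewrite -CK (mcircuit_rankD1 cC eC) -/Z -cI cardsU1 eI ltnn.
have ltBeJ : (#|B :\ e| < #|J|)%N.
  rewrite cJ (leq_trans _ (indep_leq_rank (subsetUl B C) iB)) //.
  by rewrite [X in (_ < X)%N](cardsD1 e B) eB.
have [f /setDP[fJ fBe] ifB] := indep_augment (indepS (subsetDl B [set e]) iB) iJ ltBeJ.
have fe : f != e by apply: contraNneq eJ => <-.
have fB : f \notin B by move: fBe; rewrite !inE fe.
exists f; first by have := subsetP sJBC f fJ; rewrite !inE fB (negbTE fB).
apply: mbasis00_card bB ifB _.
by rewrite cardsU1 fBe (cardsD1 e B) eB.
Qed.
End Matroid.

Lemma disjointsU1 (T : finType) (x : T) (A B : {set T}) :
  [disjoint x |: A & B] = (x \notin B) && [disjoint A & B].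
Proof. by rewrite !disjoints_subset subUset sub1set inE. Qed.

Local Open Scope ring_scope.

Lemma big_exchange (T : finType) (V : zmodType) (F : T -> V) (B : {set T}) (e f : T) :
  e \in B -> f \notin B ->
  \sum_(x in f |: (B :\ e)) F x = \sum_(x in B) F x - F e + F f.
Proof.
move=> eB fB; rewrite big_setU1 ?(big_setD1 e eB) /=; last by rewrite !inE (negbTE fB) andbF.
by rewrite addrC [F e + _]addrC addrK.
Qed.

Section Uncertainty.
Context {R : realType} {E : finType} {M : umatroid R E}.
Local Notation basis := (mbasis (uindep M) set0 set0).

Lemma mwb_exchange_le {ws : E -> R} {B : {set E}} {e f : E} :
  mwb M ws B -> e \in B -> f \notin B -> basis (f |: (B :\ e)) -> ws e <= ws f.
Proof.
move=> [_ Bmin] eB fB bB'; have := Bmin _ bB'.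
by rewrite big_exchange // -addrA lerDl addrC subr_ge0.
Qed.

Lemma mwb_exchange {ws : E -> R} {B : {set E}} {e f : E} :
  mwb M ws B -> e \in B -> f \notin B -> basis (f |: (B :\ e)) -> ws f = ws e ->
  mwb M ws (f |: (B :\ e)).
Proof.
move=> [_ Bmin] eB fB bB' wfe; split=> // B'' bB''.
by rewrite big_exchange // wfe subrK; apply: Bmin.
Qed.

Lemma wassign_uw : wassign M (uw M).
Proof. exact: uw_in. Qed.

Lemma utrivial_wassign {ws : E -> R} {e : E} : utrivial M e -> wassign M ws -> ws e = uw M e.
Proof. by move=> te /(_ e); rewrite te. Qed.

Lemma uw_eq_uL (f : E) : (forall x, Aset M f x -> uw M f <= x) -> uw M f = uL M f.
Proof.
move=> wf_lb; have Af := uw_in M f.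
apply/le_anti/andP; split; first by apply: lb_le_inf; [exists (uw M f) | ].
by apply: ge_inf Af; exists (uw M f).
Qed.

Lemma verifies_exchange {Q B : {set E}} {e f : E} :
  verifies M Q B -> e \in B -> f \notin B -> basis (f |: (B :\ e)) ->
  (forall ws, wassign M ws -> consistent M Q ws -> ws f = ws e) ->
  verifies M Q (f |: (B :\ e)).
Proof.
move=> vQB eB fB bB' wfe ws wa co.
exact: mwb_exchange (vQB _ wa co) eB fB bB' (wfe _ wa co).
Qed.

Lemma exchange_at_lower_bound {Q B : {set E}} {e f : E} {ws : E -> R} :
  verifies M Q B -> e \in B -> f \notin B -> basis (f |: (B :\ e)) ->
  utrivial M e -> uw M f <= uw M e ->
  wassign M ws -> consistent M Q ws -> ws f != uw M f ->
  ~ utrivial M f /\ uw M f = uL M f.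
Proof.
move=> vQB eB fB bB' te wfe wa co wsf.
have fQ : f \notin Q by apply: contra wsf => /co ->.
split=> //; first by move=> /utrivial_wassign/(_ wa)/eqP; apply/negP.
apply: uw_eq_uL => x Afx; apply: le_trans wfe _.
(* f is unqueried, so ws may be moved at f alone to any x in A_f. *)
pose ws' g := if g == f then x else ws g.
have wa' : wassign M ws' by move=> g; rewrite /ws'; case: eqVneq => [-> |].
have co' : consistent M Q ws'.
  by move=> g gQ; rewrite /ws'; case: eqVneq => [gf | _]; [rewrite -gf gQ in fQ | apply: co].
have := mwb_exchange_le (vQB _ wa' co') eB fB bB'.
have ef : e != f by apply: contraNneq fB => <-.
by rewrite /ws' (negbTE ef) eqxx (utrivial_wassign te wa).
Qed.
End Uncertainty.

Theorem lemma21 (R : realType) (E : finType) (M : umatroid R E) (D K : {set E}) :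
  compatible_minor M D K ->
  (forall f, f \in mground D K -> ~ utrivial M f ->
     ~ ((uw M f = uL M f /\
         exists C, [/\ mcircuit (uindep M) D K C, f \in C &
                      forall g, g \in C -> uw M g <= uw M f])
        \/
        (uw M f = uU M f /\
         exists B', [/\ mbasis (uindep M) D K B', f \in B',
           f \in mground D K :\: mspan (uindep M) D K (B' :\ f) &
           forall g, g \in mground D K :\: mspan (uindep M) D K (B' :\ f) ->
             uw M f <= uw M g]))) ->
  forall e, e \in mground D K -> utrivial M e ->
  (exists C, [/\ mcircuit (uindep M) D K C, e \in C &
                forall g, g \in C -> uw M g <= uw M e]) ->
  compatible_minor M (e |: D) K.
Proof.
move=> [Q [B [vQB mwbB sKB dDB Qmin]]] not_critical e eG te [C [cC eC Cmax]].
have eK : e \notin K by move: eG; rewrite !inE negb_or => /andP[].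
have [eB | eB] := boolP (e \in B); last first.
  by exists Q, B; split=> //; rewrite disjointsU1 eB.
have [f /setDP[fC fB] bB'] := mbasis00_exchange (uindep_axioms M) mwbB.1 sKB cC eC eB.
have fG : f \in mground D K by case/and3P: cC => /subsetP/(_ f fC).
have wef : uw M e <= uw M f := mwb_exchange_le mwbB eB fB bB'.
have wfe : uw M f <= uw M e := Cmax f fC.
have ws_fe ws : wassign M ws -> consistent M Q ws -> ws f = ws e.
  move=> wa co; rewrite (utrivial_wassign te wa).
  have [-> | wsf] := eqVneq (ws f) (uw M f); first exact/le_anti/andP.
  have [ntf wfL] := exchange_at_lower_bound vQB eB fB bB' te wfe wa co wsf.
  case: (not_critical f fG ntf); left; split=> //.
  by exists C; split=> // g gC; apply: le_trans (Cmax g gC) wef.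
have vQB' := verifies_exchange vQB eB fB bB' ws_fe.
have fe : f != e by apply: contraNneq fB => ->.
exists Q, (f |: (B :\ e)); split=> //.
- exact: vQB' _ wassign_uw (fun _ _ => erefl).
- by apply: subset_trans (subsetUr [set f] _); rewrite subsetD1 sKB eK.
- rewrite disjointsU1 !inE eq_sym (negbTE fe) eqxx /= disjoint_sym disjointsU1.
  have fD : f \notin D by move: fG; rewrite !inE negb_or => /andP[].
  by rewrite fD (disjointWl (subsetDl B [set e])) // disjoint_sym.
Qed.
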